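(* There exists an instance of the brand-effects model in which the total expected welfare of the greedy allocation is strictly smaller than the total expected welfare (evaluated in the brand-effects model) of the allocation selected by the standard model without brand effects, i.e., the allocation that places ads in positions $1,\dots,s$ in decreasing order of their eCPM bids $b_i q_i$.
   Context: Brand-effects model: there are $s$ positions and a set of advertisers, each either a brand advertiser or a non-brand advertiser; advertiser $i$ has quality score $q_i \ge 0$ and bid $b_i \ge 0$, and its eCPM bid is $b_i q_i$. Each position $k$ has two quality scores $\beta_k$ and $\eta_k$, both non-increasing in $k$, normalized so $\beta_1=\eta_1=1$. A brand (resp. non-brand) advertiser with quality $q$ shown in position $k$ is clicked with probability $\beta_k q$ (resp. $\eta_k q$). An allocation places distinct advertisers in the positions; its total expected welfare is $\sum_j b_{(j)} p_{(j)}$, where $b_{(j)}$ and $p_{(j)}$ are the bid and click probability of the ad in position $j$. The normalized eCPM of advertiser $i$ for position $k$ is $\beta_k b_i q_i$ for a brand advertiser and $\eta_k b_i q_i$ for a non-brand advertiser. The greedy allocation is defined by, for $k=1,\dots,s$ in order, placing in position $k$ the not-yet-placed ad with the highest normalized eCPM for position $k$. *)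

From mathcomp Require Import all_boot all_order all_algebra.
Set Implicit Arguments. Unset Strict Implicit. Unset Printing Implicit Defensive.
Import Order.TTheory GRing.Theory Num.Theory.
Local Open Scope ring_scope.

(* Brand-effects model: n advertisers indexed by 'I_n, s positions indexed by
   'I_s (position k in the paper is the ordinal with value k-1). *)
Section BrandEffects.
Variables (R : realFieldType) (n s : nat).
Variables (brand : 'I_n -> bool) (q b : 'I_n -> R) (beta eta : 'I_s -> R).

Definition pos_score (i : 'I_n) (k : 'I_s) : R := if brand i then beta k else eta k.

Definition click_prob (i : 'I_n) (k : 'I_s) : R := pos_score i k * q i.

Definition ecpm (i : 'I_n) : R := b i * q i.

Definition norm_ecpm (i : 'I_n) (k : 'I_s) : R := pos_score i k * b i * q i.

Definition allocation (a : 'I_s -> 'I_n) : Prop := injective a.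

Definition welfare (a : 'I_s -> 'I_n) : R := \sum_(k < s) b (a k) * click_prob (a k) k.

Definition unplaced (a : 'I_s -> 'I_n) (k : 'I_s) (i : 'I_n) : Prop :=
  forall j : 'I_s, (j < k)%N -> a j <> i.

Definition greedy_alloc (a : 'I_s -> 'I_n) : Prop :=
  allocation a /\
  forall k : 'I_s, unplaced a k (a k) /\
    forall i : 'I_n, unplaced a k i -> norm_ecpm i k <= norm_ecpm (a k) k.

Definition standard_alloc (a : 'I_s -> 'I_n) : Prop :=
  allocation a /\
  forall k : 'I_s, unplaced a k (a k) /\
    forall i : 'I_n, unplaced a k i -> ecpm i <= ecpm (a k).

Definition valid_instance : Prop :=
  (0 < s)%N /\ (s <= n)%N /\
  (forall i, 0 <= q i) /\ (forall i, 0 <= b i) /\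
  (forall k1 k2 : 'I_s, (k1 <= k2)%N -> beta k2 <= beta k1) /\
  (forall k1 k2 : 'I_s, (k1 <= k2)%N -> eta k2 <= eta k1) /\
  (forall k : 'I_s, val k = 0%N -> beta k = 1 /\ eta k = 1) /\
  (forall (i : 'I_n) (k : 'I_s), 0 <= beta k * q i <= 1 /\ 0 <= eta k * q i <= 1).

End BrandEffects.

(* In the instance below the standard model ranks three ads by eCPM bid 3, 2, 3/2.  The
   brand ad (bid 2) loses half its value in the second position and all of it in the
   third, while the other two ads lose nothing.  Greedy therefore fills the second
   position with the bid-3/2 ad and pushes the brand ad to the third position, where it
   earns nothing: welfare 3 + 3/2 + 0 against 3 + 1 + 3/2 for the standard ranking.
   Both allocations are forced, since every choice made by either rule is a strict
   maximum. *)
From mathcomp Require Import all_boot all_order all_algebra.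
From mathcomp Require Import lra.
Set Implicit Arguments. Unset Strict Implicit. Unset Printing Implicit Defensive.
Import Order.TTheory GRing.Theory Num.Theory.
Local Open Scope ring_scope.

Section GreedyForScore.
Variables (R : realFieldType) (n s : nat) (w : 'I_s -> 'I_n -> R).

(* [greedy_alloc] and [standard_alloc] are [greedy_for] the scores [norm_ecpm i k] and
   [ecpm i], up to conversion. *)
Definition greedy_for (a : 'I_s -> 'I_n) : Prop :=
  allocation a /\
  forall k, unplaced a k (a k) /\ forall i, unplaced a k i -> w k i <= w k (a k).

Definition strict_greedy_for (a : 'I_s -> 'I_n) : Prop :=
  allocation a /\
  forall k i, unplaced a k i -> i <> a k -> w k i < w k (a k).

Lemma allocation_unplaced (a : 'I_s -> 'I_n) k : allocation a -> unplaced a k (a k).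
Proof. by move=> inj_a j jk /inj_a jk_eq; rewrite jk_eq ltnn in jk. Qed.

Lemma strict_greedy_for_greedy (a : 'I_s -> 'I_n) : strict_greedy_for a -> greedy_for a.
Proof.
move=> [inj_a max_a]; split=> // k; split; first exact: allocation_unplaced.
move=> i free_i; have [-> | ne_i] := eqVneq i (a k); first exact: lexx.
by apply/ltW/max_a => //; apply/eqP.
Qed.

Lemma strict_greedy_for_unique (a a' : 'I_s -> 'I_n) :
  strict_greedy_for a -> greedy_for a' -> a' =1 a.
Proof.
move=> [inj_a max_a] [_ Ha'] k.
suff agree m (l : 'I_s) : (l < m)%N -> a' l = a l by exact: (agree k.+1).
elim: m l => [//|m IHm] l; rewrite ltnS => lm.
have same_free i : unplaced a' l i <-> unplaced a l i.
  have agree_j (j : 'I_s) : (j < l)%N -> a' j = a j.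
    by move=> jl; apply: IHm; exact: leq_trans jl lm.
  by split=> free j jl; [rewrite -agree_j | rewrite agree_j] => //; apply: free.
have [free_a'l max_a'l] := Ha' l.
apply/eqP/negPn/negP => /eqP ne.
have := max_a _ _ (proj1 (same_free _) free_a'l) ne.
by rewrite ltNge max_a'l //; apply/same_free; exact: allocation_unplaced.
Qed.

End GreedyForScore.

Lemma eq_welfare (R : realFieldType) n s (brand : 'I_n -> bool) (q b : 'I_n -> R)
    (beta eta : 'I_s -> R) (a a' : 'I_s -> 'I_n) :
  a =1 a' -> welfare brand q b beta eta a = welfare brand q b beta eta a'.
Proof. by move=> eq_a; apply: eq_bigr => k _; rewrite eq_a. Qed.

Section Counterexample.
Variable R : realFieldType.

Definition bid (i : 'I_3) : R := if val i == 0%N then 3 else if val i == 1%N then 2 else 3/2.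
Definition quality (i : 'I_3) : R := 1.
Definition is_brand (i : 'I_3) : bool := val i == 1%N.
Definition brand_score (k : 'I_3) : R := if val k == 0%N then 1 else if val k == 1%N then 1/2 else 0.
Definition plain_score (k : 'I_3) : R := 1.

Definition swap12 (k : 'I_3) : 'I_3 :=
  match val k with 1 => Ordinal (isT : 2 < 3)%N | 2 => Ordinal (isT : 1 < 3)%N | _ => k end.

Ltac case_ord3 := case=> [[|[|[|?]]] ?] //=.

Lemma valid_counterexample : valid_instance quality bid brand_score plain_score.
Proof.
rewrite /valid_instance /quality /bid /brand_score /plain_score.
split=> //; split=> //.
split; first by case_ord3.
split; first by case_ord3; lra.
split; first by case_ord3; case_ord3; lra.
split; first by case_ord3; case_ord3; lra.
split; first by case_ord3.
by case_ord3; case_ord3; lra.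
Qed.

Lemma swap12K : involutive swap12.
Proof. by case_ord3; apply: val_inj. Qed.

(* An ad placed before position [k], or the one placed at [k], contradicts the
   hypotheses; the remaining cases are numeric comparisons. *)
Ltac strict_max_ord3 :=
  case_ord3; case_ord3 => free ne;
  match goal with
  | ne : _ <> _ |- _ => try (by exfalso; apply: ne; apply: val_inj) end;
  match goal with
  | free : unplaced _ _ _ |- _ =>
      try (by case: (free (Ordinal (isT : 0 < 3)%N) isT); apply: val_inj);
      try (by case: (free (Ordinal (isT : 1 < 3)%N) isT); apply: val_inj) end;
  lra.

Lemma greedy_swap12 :
  strict_greedy_for (fun k i => norm_ecpm is_brand quality bid brand_score plain_score i k)
    swap12.
Proof.
split; first exact: inv_inj swap12K.
rewrite /norm_ecpm /pos_score /is_brand /quality /bid /brand_score /plain_score.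
strict_max_ord3.
Qed.

Lemma standard_id : strict_greedy_for (fun _ i => ecpm quality bid i) id.
Proof.
split; first exact: inj_id.
rewrite /ecpm /quality /bid.
strict_max_ord3.
Qed.

Lemma welfare_swap12_lt_id :
  welfare is_brand quality bid brand_score plain_score swap12 <
  welfare is_brand quality bid brand_score plain_score id.
Proof.
rewrite /welfare !big_ord_recl big_ord0 /click_prob /pos_score.
rewrite /is_brand /quality /bid /brand_score /plain_score /=.
lra.
Qed.

End Counterexample.

Theorem theorem7 (R : realFieldType) :
  exists (n s : nat) (brand : 'I_n -> bool) (q b : 'I_n -> R) (beta eta : 'I_s -> R),
    valid_instance q b beta eta /\
    (exists a, greedy_alloc brand q b beta eta a) /\
    (exists a : 'I_s -> 'I_n, standard_alloc q b a) /\
    forall ag ast : 'I_s -> 'I_n,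
      greedy_alloc brand q b beta eta ag ->
      standard_alloc q b ast ->
      welfare brand q b beta eta ag < welfare brand q b beta eta ast.
Proof.
exists 3%N, 3%N, is_brand, (@quality R), (@bid R), (@brand_score R), (@plain_score R).
have greedy := @greedy_swap12 R; have standard := @standard_id R.
split; first exact: valid_counterexample.
split; first by exists swap12; exact: strict_greedy_for_greedy.
split; first by exists id; exact: strict_greedy_for_greedy.
move=> ag ast /(strict_greedy_for_unique greedy) ag_eq.
move=> /(strict_greedy_for_unique standard) ast_eq.
rewrite (eq_welfare _ _ _ _ _ ag_eq) (eq_welfare _ _ _ _ _ ast_eq).
exact: welfare_swap12_lt_id.
Qed.
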